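(* Let $\Lambda$ be an essential row-finite 2-graph and let $\mathcal G=\{\mathcal G^j_v: v\in\Lambda^0, 1\le j\le m(v)\}$ be an insplitting partition of its 1-skeleton satisfying the pairing condition. Then the quotient $\Lambda_I=G_I^*/\sim_I$ of the path category of the insplit 2-colored graph $G_I$ is a 2-graph.
   Context: A 2-graph is a countable category $\Lambda$ with a functor $d:\Lambda\to\mathbb N^2$ with unique factorization (if $d(\lambda)=m+n$ there are unique $\mu,\nu$ with $d(\mu)=m,d(\nu)=n,\lambda=\mu\nu$; composition $\mu\nu$ when $s(\mu)=r(\nu)$). $\Lambda^m=d^{-1}(m)$, $\Lambda^0$ are the vertices, $\Lambda^1=\Lambda^{\varepsilon_1}\sqcup\Lambda^{\varepsilon_2}$; row-finite: $v\Lambda^m$ finite; essential: $v\Lambda^m$ and $\Lambda^mv$ nonempty for all $v,m$. The 1-skeleton is the 2-colored graph $G=(\Lambda^0,\Lambda^1,r,s)$; $\Lambda$ is the quotient of its path category by the relation $\sim$ generated by commuting squares $fg\sim ab$ (two-colored paths equal in $\Lambda$). An insplitting partition: for each $v\in\Lambda^0$, a partition of $v\Lambda^1=r^{-1}(v)\cap\Lambda^1$ into nonempty sets $\mathcal G^1_v,\dots,\mathcal G^{m(v)}_v$, satisfying the pairing condition: whenever $a,f\in v\Lambda^1$ and there exist edges $g,b$ with $ag\sim fb$, then $f\in\mathcal G^j_v$ iff $a\in\mathcal G^j_v$. The insplit 2-colored graph $G_I$: vertices $v^i$ ($1\le i\le m(v)$); edges $f^i$ ($f\in\Lambda^1$,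 $1\le i\le m(s(f))$), color $d(f^i)=d(f)$, $s(f^i)=s(f)^i$, $r(f^i)=r(f)^j$ where $f\in\mathcal G^j_{r(f)}$. $\sim_I$ is the equivalence relation on paths of $G_I$ (each vertex/edge equivalent only to itself, compatible with concatenation) generated by the commuting squares $f^ig^k\sim_I a^jb^k$ iff $g\in\mathcal G^i_{s(f)}$, $b\in\mathcal G^j_{s(a)}$ and $fg\sim ab$ in $\Lambda$. *)

From mathcomp Require Import all_boot.
From Stdlib Require Import Relations.
Set Implicit Arguments.
Unset Strict Implicit.
Unset Printing Implicit Defensive.

Definition deg2 := (nat * nat)%type.
Definition dadd (m n : deg2) : deg2 := (m.1 + n.1, m.2 + n.2)%N.
Definition eps1 : deg2 := (1, 0)%N.
Definition eps2 : deg2 := (0, 1)%N.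

(** A 2-graph: a countable category (composition [comp mu nu] = "mu nu",
    meaningful when [s mu = r nu]) with a degree functor to N^2 having
    the unique factorization property. *)
Record two_graph := TwoGraph {
  Obj : countType;
  Mor : countType;
  tg_r : Mor -> Obj;
  tg_s : Mor -> Obj;
  tg_id : Obj -> Mor;
  tg_comp : Mor -> Mor -> Mor;
  tg_d : Mor -> deg2;
  tg_r_id : forall v, tg_r (tg_id v) = v;
  tg_s_id : forall v, tg_s (tg_id v) = v;
  tg_r_comp : forall mu nu, tg_s mu = tg_r nu -> tg_r (tg_comp mu nu) = tg_r mu;
  tg_s_comp : forall mu nu, tg_s mu = tg_r nu -> tg_s (tg_comp mu nu) = tg_s nu;
  tg_id_l : forall mu, tg_comp (tg_id (tg_r mu)) mu = mu;
  tg_id_r : forall mu, tg_comp mu (tg_id (tg_s mu)) = mu;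
  tg_assoc : forall la mu nu, tg_s la = tg_r mu -> tg_s mu = tg_r nu ->
      tg_comp (tg_comp la mu) nu = tg_comp la (tg_comp mu nu);
  tg_d_id : forall v, tg_d (tg_id v) = (0, 0)%N;
  tg_d_comp : forall mu nu, tg_s mu = tg_r nu ->
      tg_d (tg_comp mu nu) = dadd (tg_d mu) (tg_d nu);
  tg_fact : forall la m n, tg_d la = dadd m n ->
      exists mu nu, [/\ tg_s mu = tg_r nu, tg_d mu = m, tg_d nu = n
                      & la = tg_comp mu nu];
  tg_fact_uniq : forall mu nu mu' nu',
      tg_s mu = tg_r nu -> tg_s mu' = tg_r nu' ->
      tg_d mu = tg_d mu' -> tg_d nu = tg_d nu' ->
      tg_comp mu nu = tg_comp mu' nu' -> mu = mu' /\ nu = nu'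
}.

Section TwoGraphNotions.
Variable L : two_graph.
Local Notation r := (@tg_r L).
Local Notation s := (@tg_s L).
Local Notation d := (@tg_d L).
Local Notation comp := (@tg_comp L).

Definition is_edge (f : Mor L) : Prop := d f = eps1 \/ d f = eps2.

Definition row_finite : Prop :=
  forall (v : Obj L) (m : deg2), exists S : seq (Mor L),
    forall la, r la = v -> d la = m -> la \in S.

Definition essential : Prop :=
  forall (v : Obj L) (m : deg2),
    (exists la, r la = v /\ d la = m) /\ (exists la, s la = v /\ d la = m).

(** An insplitting partition, blocks indexed 0 <= j < m(v) (the paper's
    1 <= j <= m(v)); [part f] is the index j with f in G^j_{r(f)}. *)
Definition insplitting_partition (mv : Obj L -> nat) (part : Mor L -> nat)
  : Prop :=
  (forall f, is_edge f -> (part f < mv (r f))%N) /\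
  (forall v j, (j < mv v)%N -> exists f, [/\ is_edge f, r f = v & part f = j]).

Definition pairing_condition (part : Mor L -> nat) : Prop :=
  forall a f g b, is_edge a -> is_edge f -> is_edge g -> is_edge b ->
    r a = r f -> s a = r g -> s f = r b -> comp a g = comp f b ->
    part a = part f.

Definition IV := (Obj L * nat)%type.
Definition IE := (Mor L * nat)%type.
Definition validV (mv : Obj L -> nat) (x : IV) : Prop := (x.2 < mv x.1)%N.
Definition validE (mv : Obj L -> nat) (e : IE) : Prop :=
  is_edge e.1 /\ (e.2 < mv (s e.1))%N.
Definition rI (part : Mor L -> nat) (e : IE) : IV := (r e.1, part e.1).
Definition sI (e : IE) : IV := (s e.1, e.2).
Definition colI (e : IE) : deg2 := d e.1.

Definition squareI (mv : Obj L -> nat) (part : Mor L -> nat)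
  (x y x' y' : IE) : Prop :=
  let: (f, i) := x in let: (g, k) := y in
  let: (a, j) := x' in let: (b, k') := y' in
  k = k' /\ validE mv x /\ validE mv y /\ validE mv x' /\ validE mv y' /\
  part g = i /\ part b = j /\
  s f = r g /\ s a = r b /\ comp f g = comp a b.

End TwoGraphNotions.

(** A path is a range vertex
    together with its list of edges e1 ... en (r(path) = r(e1)). *)
Section Paths.
Variables (V E : Type) (validV : V -> Prop) (validE : E -> Prop)
  (r s : E -> V) (col : E -> deg2).

Definition gpath := (V * seq E)%type.

Fixpoint chain (v : V) (es : seq E) : Prop :=
  match es with
  | [::] => True
  | e :: es' => [/\ validE e, r e = v & chain (s e) es']
  end.

Definition valid_path (p : gpath) : Prop := validV p.1 /\ chain p.1 p.2.

Fixpoint end_vertex (v : V) (es : seq E) : V :=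
  match es with [::] => v | e :: es' => end_vertex (s e) es' end.

Definition psrc (p : gpath) : V := end_vertex p.1 p.2.
Definition prng (p : gpath) : V := p.1.

Definition pconcat (p q : gpath) : gpath := (p.1, p.2 ++ q.2).

Definition pdeg (p : gpath) : deg2 :=
  foldr (fun e acc => dadd (col e) acc) (0, 0)%N p.2.

Variable square : E -> E -> E -> E -> Prop.

Inductive sq_step : gpath -> gpath -> Prop :=
| SqStep v pre x y x' y' post : square x y x' y' ->
    sq_step (v, pre ++ [:: x; y] ++ post) (v, pre ++ [:: x'; y'] ++ post).

Definition sq_equiv : gpath -> gpath -> Prop := clos_refl_sym_trans _ sq_step.

(** The quotient G^* / sq_equiv is a 2-graph: the relation is compatible
    with range, source and degree (so the quotient is a category with a
    well-defined degree functor), and the degree functor has unique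
    factorization on equivalence classes. *)
Definition quotient_is_2graph : Prop :=
  (forall p q, valid_path p -> sq_equiv p q ->
     [/\ valid_path q, prng q = prng p, psrc q = psrc p & pdeg q = pdeg p]) /\
  (forall p m n, valid_path p -> pdeg p = dadd m n ->
     exists q1 q2, valid_path q1 /\ valid_path q2 /\ psrc q1 = prng q2 /\
                   pdeg q1 = m /\ pdeg q2 = n /\ sq_equiv (pconcat q1 q2) p) /\
  (forall q1 q2 q1' q2', valid_path q1 -> valid_path q2 ->
     valid_path q1' -> valid_path q2' ->
     psrc q1 = prng q2 -> psrc q1' = prng q2' ->
     pdeg q1 = pdeg q1' -> pdeg q2 = pdeg q2' ->
     sq_equiv (pconcat q1 q2) (pconcat q1' q2') ->
     sq_equiv q1 q1' /\ sq_equiv q2 q2').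

End Paths.

Definition insplit_is_2graph (L : two_graph) (mv : Obj L -> nat)
  (part : Mor L -> nat) : Prop :=
  @quotient_is_2graph (IV L) (IE L) (validV mv) (validE mv)
    (rI part) (@sI L) (@colI L) (squareI mv part).

From mathcomp Require Import all_boot.
From Stdlib Require Import Relations.
Set Implicit Arguments.
Unset Strict Implicit.
Unset Printing Implicit Defensive.

(* A path of G_I represents a morphism of Lambda: the composite of its
   underlying edges.  Each commuting square of G_I comes from a commuting
   square of Lambda, and the pairing condition puts both sides at the same
   vertex of G_I, so ~_I preserves range, source, degree and this composite.
   Conversely, factorizing f g in Lambda with the colours exchanged lets one
   swap adjacent edges of different colours, so every path is equivalent to
   one with any prescribed colour word of the same degree; and a path of G_I
   is determined by its colour word, its composite and its source.  Hence
   paths with the same source, degree and composite are equivalent, which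
   yields factorization in Lambda_I by sorting colours and its uniqueness from
   unique factorization in Lambda. *)

Lemma clos_rst_incl (A : Type) (R Q : relation A) :
  reflexive A Q -> transitive A Q -> symmetric A R -> inclusion A R Q ->
  inclusion A (clos_refl_sym_trans A R) Q.
Proof.
move=> Qrefl Qtrans Rsym RQ x y xy.
suff [] : Q x y /\ Q y x by [].
elim: xy => {x y} [x y xy | x | x y _ [] | x y z _ [xy yx] _ [yz zy]] //.
- by split; [exact: RQ | exact/RQ/Rsym].
- by split; [apply: Qtrans xy yz | apply: Qtrans zy yx].
Qed.

Definition dsum (cs : seq deg2) : deg2 := foldr dadd (0, 0) cs.

Lemma dadd0 m : dadd m (0, 0) = m.
Proof. by rewrite /dadd !addn0; case: m. Qed.

Lemma dsum_cat a b : dsum (a ++ b) = dadd (dsum a) (dsum b).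
Proof.
elim: a => [|c a IH] /=; first by case: (dsum b).
by rewrite IH /dadd /= !addnA.
Qed.

Definition two_colored (c : deg2) : bool := (c == eps1) || (c == eps2).

Definition ncolors (m : deg2) : seq deg2 := nseq m.1 eps1 ++ nseq m.2 eps2.

Lemma all_ncolors m : all two_colored (ncolors m).
Proof. by rewrite all_cat !all_nseq /two_colored !eqxx !orbT. Qed.

Lemma dsum_ncolors m : dsum (ncolors m) = m.
Proof.
have dsum_nseq k c : dsum (nseq k c) = (k * c.1, k * c.2).
  by elim: k => //= k ->; rewrite /dadd !mulSn.
by rewrite dsum_cat !dsum_nseq /dadd /= !muln1 !muln0 addn0; case: m.
Qed.

Lemma perm_ncolors cs : all two_colored cs -> perm_eq cs (ncolors (dsum cs)).
Proof.
elim: cs => //= c cs IH /andP [/orP [] /eqP -> /IH cs_perm].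
  by rewrite /ncolors /= perm_cons.
by rewrite /ncolors /= add0n perm_sym -cat1s perm_catCA perm_cons perm_sym.
Qed.

Lemma perm_two_colored a b : all two_colored a -> all two_colored b ->
  dsum a = dsum b -> perm_eq a b.
Proof.
move=> /perm_ncolors a_perm /perm_ncolors b_perm dsum_ab.
by rewrite (perm_trans a_perm) // dsum_ab perm_sym.
Qed.

Section PathCategory.
Variables (V E : Type) (validE : E -> Prop).
Variables (r s : E -> V) (col : E -> deg2) (square : E -> E -> E -> E -> Prop).

Local Notation chain := (chain validE r s).
Local Notation end_vertex := (end_vertex s).

Lemma chain_cat v a b :
  chain v (a ++ b) <-> chain v a /\ chain (end_vertex v a) b.
Proof.
elim: a v => [|e a IH] v /=; first by tauto.
split=> [[ve re /IH [ca cb]] | [[ve re ca] cb]] //.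
by split=> //; apply/IH.
Qed.

Lemma end_vertex_cat v a b :
  end_vertex v (a ++ b) = end_vertex (end_vertex v a) b.
Proof. by elim: a v => //= e a IH v. Qed.

Lemma pdeg_dsum (v : V) es : pdeg col (v, es) = dsum (map col es).
Proof. by rewrite /dsum foldr_map. Qed.

Lemma end_vertex_valid (validV : V -> Prop) v es :
  (forall e, validE e -> validV (s e)) ->
  validV v -> chain v es -> validV (end_vertex v es).
Proof. by move=> sV; elim: es v => //= e es IH v _ [/sV /IH]. Qed.

Lemma sq_step_sym :
  (forall x y x' y', square x y x' y' -> square x' y' x y) ->
  symmetric _ (@sq_step V E square).
Proof. by move=> square_sym p q [v pre x y x' y' post /square_sym]; constructor. Qed.

Lemma sq_equiv_cons (v : V) (e : E) (p q : gpath V E) :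
  sq_equiv square p q -> sq_equiv square (v, e :: p.2) (v, e :: q.2).
Proof.
elim=> {p q} [p q [u pre x y x' y' post sq_xy] | p | p q _ | p q t _ pq _ qt].
- by apply: rst_step; apply: (SqStep v (e :: pre) post sq_xy).
- exact: rst_refl.
- exact: rst_sym.
- exact: rst_trans pq qt.
Qed.

End PathCategory.

Section Insplitting.
Variables (L : two_graph) (mv : Obj L -> nat) (part : Mor L -> nat).
Hypothesis part_lt : forall f, is_edge f -> part f < mv (tg_r f).
Hypothesis pairing : pairing_condition part.

Local Notation r := (@tg_r L).
Local Notation s := (@tg_s L).
Local Notation d := (@tg_d L).
Local Notation comp := (@tg_comp L).
Local Notation ch := (chain (validE mv) (rI part) (@sI L)).
Local Notation ev := (end_vertex (@sI L)).
Local Notation deg := (pdeg (@colI L)).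
Local Notation sq := (squareI mv part).
Local Notation equiv := (sq_equiv sq).

Fixpoint path_mor (w : IV L) (es : seq (IE L)) : Mor L :=
  if es is e :: es' then comp e.1 (path_mor (sI e) es') else tg_id w.1.

Lemma path_morP w es : ch w es ->
  [/\ r (path_mor w es) = w.1, s (path_mor w es) = (ev w es).1
    & d (path_mor w es) = deg (w, es)].
Proof.
elim: es w => [|e es IH] w /=; first by rewrite tg_r_id tg_s_id tg_d_id.
move=> [_ <- /IH [r_es s_es d_es]].
have se : s e.1 = r (path_mor (sI e) es) by rewrite r_es.
by rewrite tg_r_comp // tg_s_comp // tg_d_comp // d_es.
Qed.

Lemma path_mor_cat w a b : ch w (a ++ b) ->
  path_mor w (a ++ b) = comp (path_mor w a) (path_mor (ev w a) b).
Proof.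
elim: a w => [|e a IH] w /=.
  by move=> /path_morP [<- _ _]; rewrite tg_id_l.
move=> [_ _ ch_ab].
have /chain_cat [ch_a ch_b] := ch_ab.
have [r_a s_a _] := path_morP ch_a.
have [r_b _ _] := path_morP ch_b.
by rewrite IH // tg_assoc // ?r_a ?s_a ?r_b.
Qed.

Definition data_preserved (p q : gpath (IV L) (IE L)) : Prop :=
  ch p.1 p.2 -> [/\ ch q.1 q.2, q.1 = p.1, ev q.1 q.2 = ev p.1 p.2,
                    deg q = deg p & path_mor q.1 q.2 = path_mor p.1 p.2].

Lemma data_preserved_refl : reflexive _ data_preserved.
Proof. by []. Qed.

Lemma data_preserved_trans : transitive _ data_preserved.
Proof.
move=> p q t pq qt /pq [/qt [ch_t t1 t_ev t_deg t_mor] q1 q_ev q_deg q_mor].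
by split; congruence.
Qed.

Lemma data_preserved_cat w pre l l' post :
  data_preserved (ev w pre, l) (ev w pre, l') ->
  data_preserved (w, pre ++ l ++ post) (w, pre ++ l' ++ post).
Proof.
move=> ll' /= /[dup] ch_all /chain_cat [ch_pre /[dup] ch_rest].
move=> /chain_cat [/ll' [ch_l' _ ev_l deg_l mor_l] ch_post].
have ch_rest' : ch (ev w pre) (l' ++ post) by apply/chain_cat; rewrite ev_l.
have ch_all' : ch w (pre ++ l' ++ post) by apply/chain_cat.
split=> //.
- by rewrite !end_vertex_cat ev_l.
- by move: deg_l; rewrite !pdeg_dsum /= !map_cat !dsum_cat => ->.
- by rewrite !path_mor_cat // ev_l mor_l.
Qed.

Lemma squareI_sym x y x' y' : sq x y x' y' -> sq x' y' x y.
Proof.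
case: x y x' y' => [f i] [g k] [a j] [b k'] /=.
by move=> [<-]; intuition.
Qed.

Lemma squareI_data u x y x' y' : sq x y x' y' ->
  data_preserved (u, [:: x; y]) (u, [:: x'; y']).
Proof.
case: x y x' y' => [f i] [g k] [a j] [b k'] /=.
move=> [<- [_ [vgk [vaj [vbk [_ [bj [fg [ab fg_ab]]]]]]]]].
rewrite /data_preserved /= => -[[ef _] <- _].
have rfa : r f = r a by rewrite -(tg_r_comp fg) -(tg_r_comp ab) fg_ab.
have sgb : s g = s b by rewrite -(tg_s_comp fg) -(tg_s_comp ab) fg_ab.
(* The pairing condition puts the two sides at the same vertex of G_I. *)
have pfa : part f = part a.
  by apply: (pairing (g := g) (b := b)) => //; [case: vaj | case: vgk | case: vbk].
rewrite /sI /rI /colI /= -sgb.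
split=> //.
- by rewrite rfa pfa ab bj.
- by rewrite /pdeg /= !dadd0 -!tg_d_comp // fg_ab.
- by rewrite tg_id_r sgb tg_id_r fg_ab.
Qed.

Lemma sq_step_data p q : sq_step sq p q -> data_preserved p q.
Proof.
by case=> v pre x y x' y' post sq_xy; apply/data_preserved_cat/squareI_data.
Qed.

Lemma sq_equiv_data p q : equiv p q -> data_preserved p q.
Proof.
apply: clos_rst_incl; [exact: data_preserved_refl | exact: data_preserved_trans | | exact: sq_step_data].
by apply: sq_step_sym; apply: squareI_sym.
Qed.

Lemma swap_edges x y : validE mv x -> validE mv y -> sI x = rI part y ->
  exists x' y', [/\ sq x y x' y', colI x' = colI y & colI y' = colI x].
Proof.
case: x y => [f i] [g k] /[dup] vfi [ef _] /[dup] vgk [eg _] [fg gi].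
have /tg_fact [a [b [ab da db fg_ab]]] : d (comp f g) = dadd (d g) (d f).
  by rewrite tg_d_comp // /dadd addnC [(d f).2 + _]addnC.
have ea : is_edge a by rewrite /is_edge da.
have eb : is_edge b by rewrite /is_edge db.
have sgb : s g = s b by rewrite -(tg_s_comp fg) fg_ab tg_s_comp.
have vaj : validE mv (a, part b) by split=> //=; rewrite ab; apply: part_lt.
have vbk : validE mv (b, k) by case: vgk => _ /=; rewrite sgb.
by exists (a, part b), (b, k); split; rewrite /colI //=.
Qed.

Lemma equiv_move_to_front v pre e post : ch v (pre ++ e :: post) ->
  exists e' rest, [/\ equiv (v, pre ++ e :: post) (v, e' :: rest),
    colI e' = colI e & map (@colI L) rest = map (@colI L) (pre ++ post)].
Proof.
elim/last_ind: pre e post => [|pre x IH] e post.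
  by move=> _; exists e, post; split=> //; apply: rst_refl.
rewrite cat_rcons => ch_xe.
have /chain_cat [_ [vx _ [ve xe _]]] := ch_xe.
have [x' [y' [sq_xe col_x' col_y']]] := swap_edges vx ve (esym xe).
have step_xe : sq_step sq (v, pre ++ [:: x; e] ++ post) (v, pre ++ [:: x'; y'] ++ post).
  exact: SqStep.
have [ch_x'y' _ _ _ _] := sq_step_data step_xe ch_xe.
have [e' [rest [eq_rest col_e' col_rest]]] := IH _ _ ch_x'y'.
exists e', rest; split.
- by apply: rst_trans eq_rest; apply: rst_step.
- by rewrite col_e' col_x'.
- by rewrite col_rest !map_cat /= col_y' map_rcons cat_rcons.
Qed.

Lemma equiv_reorder_colors v es cs : ch v es -> perm_eq (map (@colI L) es) cs ->
  exists es', equiv (v, es) (v, es') /\ map (@colI L) es' = cs.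
Proof.
elim: cs v es => [|c cs IH] v es ch_es perm_es.
  move/perm_size: perm_es; rewrite size_map; case: es ch_es => // _ _.
  by exists [::]; split=> //; apply: rst_refl.
have /mapP [e e_in col_e] : c \in map (@colI L) es by rewrite (perm_mem perm_es) mem_head.
case/splitPr: e_in ch_es perm_es => pre post ch_es perm_es.
have [e' [rest [eq_rest col_e' col_rest]]] := equiv_move_to_front ch_es.
have [[_ _ ch_rest] _ _ _ _] := sq_equiv_data eq_rest ch_es.
have perm_rest : perm_eq (map (@colI L) rest) cs.
  rewrite -(perm_cons c) col_rest -(permPr perm_es) col_e !map_cat /=.
  by rewrite -cat1s perm_catCA.
have [es' [eq_es' col_es']] := IH _ _ ch_rest perm_rest.
exists (e' :: es'); split; last by rewrite /= col_e' col_es' col_e.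
exact: rst_trans eq_rest (sq_equiv_cons v e' eq_es').
Qed.

Lemma chain_two_colored v es : ch v es -> all two_colored (map (@colI L) es).
Proof.
elim: es v => //= e es IH v [[ee _] _ /IH ->].
by rewrite andbT /two_colored /colI; case: ee => ->; rewrite eqxx ?orbT.
Qed.

Lemma path_mor_inj v v' es es' : ch v es -> ch v' es' ->
  map (@colI L) es = map (@colI L) es' -> path_mor v es = path_mor v' es' ->
  ev v es = ev v' es' -> (v, es) = (v', es').
Proof.
elim: es v v' es' => [|e es IH] v v' [|e' es'] //= => [_ _ _ _ -> //|].
move=> [_ <- ch_es] [_ <- ch_es'] [col_e col_es] mor_e ev_e.
have [r_es _ d_es] := path_morP ch_es.
have [r_es' _ d_es'] := path_morP ch_es'.
have [e1 mor_es] : e.1 = e'.1 /\ path_mor (sI e) es = path_mor (sI e') es'.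
  by apply: tg_fact_uniq; rewrite ?r_es ?r_es' // d_es d_es' !pdeg_dsum /= col_es.
case: (IH _ _ _ ch_es ch_es' col_es mor_es ev_e) => _ e2 ->.
by rewrite [e]surjective_pairing [e']surjective_pairing e1 e2.
Qed.

Lemma equiv_of_path_mor v v' es es' : ch v es -> ch v' es' ->
  deg (v, es) = deg (v', es') -> path_mor v es = path_mor v' es' ->
  ev v es = ev v' es' -> equiv (v, es) (v', es').
Proof.
move=> ch_es ch_es' deg_eq mor_eq ev_eq.
have perm_col : perm_eq (map (@colI L) es') (map (@colI L) es).
  apply: perm_two_colored; [exact: chain_two_colored ch_es' | exact: chain_two_colored ch_es |].
  by move: deg_eq; rewrite !pdeg_dsum => ->.
have [es'' [eq_es'' col_es'']] := equiv_reorder_colors ch_es' perm_col.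
have [/= ch_es'' _ ev_es'' _ mor_es''] := sq_equiv_data eq_es'' ch_es'.
have -> : (v, es) = (v', es'') by apply: path_mor_inj; congruence.
exact: rst_sym.
Qed.

Local Notation valid := (valid_path (validV mv) (validE mv) (rI part) (@sI L)).
Local Notation src := (psrc (@sI L)).

Lemma insplit_equiv_compat p q : valid p -> equiv p q ->
  [/\ valid q, prng q = prng p, src q = src p & deg q = deg p].
Proof.
case: p q => [v es] [w fs] [valid_v ch_es] /sq_equiv_data /(_ ch_es) /= [ch_fs wv ev_fs deg_fs _].
by subst w; split.
Qed.

Lemma insplit_factorization p m n : valid p -> deg p = dadd m n ->
  exists q1 q2, valid q1 /\ valid q2 /\ src q1 = prng q2 /\
    deg q1 = m /\ deg q2 = n /\ equiv (pconcat q1 q2) p.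
Proof.
case: p => v es [valid_v ch_es] deg_es.
have perm_col : perm_eq (map (@colI L) es) (ncolors m ++ ncolors n).
  apply: perm_two_colored; first exact: chain_two_colored ch_es.
    by rewrite all_cat !all_ncolors.
  by rewrite -(pdeg_dsum _ v) deg_es dsum_cat !dsum_ncolors.
have [es' [eq_es' col_es']] := equiv_reorder_colors ch_es perm_col.
have [/= ch_es' _ _ _ _] := sq_equiv_data eq_es' ch_es.
set k := size (ncolors m).
have /chain_cat [ch_1 ch_2] : ch v (take k es' ++ drop k es') by rewrite cat_take_drop.
exists (v, take k es'), (ev v (take k es'), drop k es').
do !split=> //.
- by apply: end_vertex_valid ch_1 => // e [].
- by rewrite pdeg_dsum map_take col_es' take_size_cat // dsum_ncolors.
- by rewrite pdeg_dsum map_drop col_es' drop_size_cat // dsum_ncolors.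
- by rewrite /pconcat /= cat_take_drop; apply: rst_sym.
Qed.

Lemma insplit_unique_factorization q1 q2 q1' q2' :
  valid q1 -> valid q2 -> valid q1' -> valid q2' ->
  src q1 = prng q2 -> src q1' = prng q2' ->
  deg q1 = deg q1' -> deg q2 = deg q2' ->
  equiv (pconcat q1 q2) (pconcat q1' q2') -> equiv q1 q1' /\ equiv q2 q2'.
Proof.
case: q1 q2 q1' q2' => [v1 es1] [v2 es2] [v1' es1'] [v2' es2'].
move=> [_ ch1] [_ ch2] [_ ch1'] [_ ch2']; rewrite /psrc /prng /= => s12 s12' deg1 deg2 eq12.
have ch12 : ch v1 (es1 ++ es2) by apply/chain_cat; rewrite s12.
have ch12' : ch v1' (es1' ++ es2') by apply/chain_cat; rewrite s12'.
have [_ _ /= ev12 _ mor12] := sq_equiv_data eq12 ch12.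
rewrite !path_mor_cat // s12 s12' in mor12.
have [_ s_1 d_1] := path_morP ch1; have [r_2 _ d_2] := path_morP ch2.
have [_ s_1' d_1'] := path_morP ch1'; have [r_2' _ d_2'] := path_morP ch2'.
have [mor1 mor2] : path_mor v1' es1' = path_mor v1 es1 /\
                   path_mor v2' es2' = path_mor v2 es2.
  by apply: tg_fact_uniq; rewrite ?s_1 ?r_2 ?s_1' ?r_2' ?s12 ?s12' ?d_1 ?d_1' ?d_2 ?d_2'.
have ev2 : ev v2 es2 = ev v2' es2' by rewrite -s12 -s12' -!end_vertex_cat.
have eq2 : equiv (v2, es2) (v2', es2') by apply: equiv_of_path_mor.
have [_ /= v2_eq _ _ _] := sq_equiv_data eq2 ch2.
by split=> //; apply: equiv_of_path_mor; rewrite // s12 s12' v2_eq.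
Qed.

End Insplitting.

Theorem theorem5p8 (L : two_graph) (mv : Obj L -> nat) (part : Mor L -> nat) :
  row_finite L -> essential L ->
  insplitting_partition mv part -> pairing_condition part ->
  insplit_is_2graph mv part.
Proof.
move=> _ _ [part_lt _] pairing.
split; [|split].
- exact: insplit_equiv_compat.
- exact: insplit_factorization.
- exact: insplit_unique_factorization.
Qed.
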